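(* Let $\mathbb{F}$ be any field and $d\ge 1$. Suppose $T,A\in GL(d,\mathbb{F})$ commute, and that $T$ is conjugate in $GL(d,\mathbb{F})$ to $TA$ and also to $TA^2$. Then every eigenvalue of $A$ (in an algebraic closure of $\mathbb{F}$) is a root of unity. *)

From mathcomp Require Import all_boot all_algebra.
Set Implicit Arguments. Unset Strict Implicit. Unset Printing Implicit Defensive.
Import GRing.Theory.
Local Open Scope ring_scope.

Definition mx_conj (F : fieldType) (d : nat) (A B : 'M[F]_d) : Prop :=
  exists2 P : 'M[F]_d, P \in unitmx & B = invmx P *m A *m P.

Definition is_root_of_unity (L : fieldType) (a : L) : Prop :=
  exists2 n : nat, (0 < n)%N & a ^+ n = 1.

From mathcomp Require Import all_boot all_algebra perm ring.
Set Implicit Arguments. Unset Strict Implicit. Unset Printing Implicit Defensive.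
Import GRing.Theory Num.Theory.
Local Open Scope ring_scope.

(* Over an algebraic closure the commuting matrices T and A are simultaneously
   triangularizable, with diagonals (t_i) and (u_i); then T, TA and TA^2 have
   the spectra (t_i), (t_i u_i) and (t_i u_i^2), counted with multiplicity.
   As these spectra coincide, there are permutations p and q with
   t_i u_i = t_(p i) and t_i u_i^2 = t_(q i), hence t_(p i)^2 = t_i t_(q i).
   A rational vector x orthogonal to every 2e_(p k) - e_k - e_(q k) satisfies
   2 x_(p k) = x_k + x_(q k); as p and q permute the coordinates, summing squares
   gives sum_k (x_k - x_(q k))^2 = 0, so x_(p i) = x_i.  By duality some positive
   integer multiple N (e_(p i) - e_i) is an integral combination of the vectors
   2e_(p k) - e_k - e_(q k), and using these as exponents on the t's yields
   u_i^N = (t_(p i) / t_i)^N = 1. *)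

Lemma closed_eigenvalue (C : closedFieldType) n (A : 'M[C]_n) :
  (0 < n)%N -> exists a, eigenvalue A a.
Proof.
move=> n_gt0; have /closed_rootP [a rAa] : size (char_poly A) != 1%N.
  by rewrite size_char_poly; case: n n_gt0 A.
by exists a; rewrite eigenvalue_root_char.
Qed.

Lemma closed_common_eigenvector2 (C : closedFieldType) n (A B : 'M[C]_n) :
  (0 < n)%N -> A *m B = B *m A ->
  exists2 v : 'rV_n, v != 0 & stablemx v A && stablemx v B.
Proof.
move=> n_gt0 cAB; have [a Aa] := closed_eigenvalue A n_gt0.
set V := eigenspace A a.
have VB : stablemx V B by apply: comm_mx_stable_eigenspace.
have [b /eigenvalueP [w wB w0]] : exists b, eigenvalue (restrictmx V B) b.
  by apply: closed_eigenvalue; rewrite lt0n mxrank_eq0.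
exists (w *m row_base V); first by rewrite mulmx_free_eq0 ?row_base_free.
apply/andP; split.
  by apply/eigenvectorP; exists a; rewrite mulmx_sub // eq_row_base.
rewrite -stablemx_restrict //; apply/eigenvectorP; exists b.
by apply/eigenspaceP.
Qed.

Lemma row_free_unitmx_ext (F : fieldType) m k (V : 'M[F]_(m, m + k)) :
  row_free V -> exists2 S : 'M[F]_(m + k), S \in unitmx & usubmx S = V.
Proof.
move=> Vfree; pose U : 'M[F]_(m, m + k) := pid_mx m.
have rkU : \rank (U *m col_mx V 0) = \rank U.
  rewrite /U pid_mx_row mul_row_col mul1mx mul0mx addr0 -pid_mx_row.
  by rewrite (eqP Vfree) rank_pid_mx ?leq_addr.
have [S Su USE] := complete_unitmx rkU; exists S => //.
rewrite /U pid_mx_row mul_row_col mul1mx mul0mx addr0 in USE.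
by rewrite USE -[S in _ *m S]vsubmxK mul_row_col mul1mx mul0mx addr0.
Qed.

Lemma conjmx_ursub_stable (F : fieldType) m1 m2 (S A : 'M[F]_(m1 + m2)) :
  S \in unitmx -> stablemx (usubmx S) A -> ursubmx (conjmx S A) = 0.
Proof.
move=> Su /submxP [D SA].
have : usubmx (conjmx S A) = D *m row_mx 1%:M 0.
  rewrite conjumx // -!mul_usub_mx SA -mulmxA mul_usub_mx mulmxV //.
  by rewrite scalar_mx_block -[block_mx _ _ _ _]/(col_mx _ _) col_mxKu.
by rewrite /ursubmx => ->; rewrite mul_mx_row row_mxKr mulmx0.
Qed.

Lemma drsubmxM (R : pzSemiRingType) m1 m2 (X Y : 'M[R]_(m1 + m2)) :
  ursubmx Y = 0 -> drsubmx (X *m Y) = drsubmx X *m drsubmx Y.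
Proof.
move=> urY; rewrite -{1}[X]submxK -{1}[Y]submxK urY mulmx_block block_mxKdr.
by rewrite mulmx0 add0r.
Qed.

Lemma is_trig_conjmx_block (F : fieldType) m1 m2
    (Q : 'M[F]_m2) (M : 'M[F]_(m1 + m2)) :
  Q \in unitmx -> ursubmx M = 0 -> is_trig_mx (ulsubmx M) ->
  is_trig_mx (conjmx Q (drsubmx M)) ->
  is_trig_mx (conjmx (block_mx 1%:M 0 0 Q) M).
Proof.
move=> Qu urM ulM QM.
have Bu : (block_mx 1%:M 0 0 Q : 'M_(m1 + m2)) \in unitmx.
  by rewrite block_diag_mx_unit unitmx1.
rewrite conjumx // invmx_block_diag // invmx1 -[M]submxK urM !mulmx_block.
rewrite !(mulmx0, mul0mx, mul1mx, mulmx1, addr0, add0r) is_trig_block_mx //.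
by rewrite eqxx ulM -conjumx.
Qed.

Lemma closed_cotrigonalization2 (C : closedFieldType) n (A B : 'M[C]_n) :
  A *m B = B *m A ->
  exists2 P : 'M[C]_n, P \in unitmx &
    is_trig_mx (conjmx P A) && is_trig_mx (conjmx P B).
Proof.
elim: n A B => [|k IHk] A B cAB.
  exists 1%:M; rewrite ?unitmx1 // !conj1mx.
  by apply/andP; split; apply/is_trig_mxP => -[].
(* With a common eigenvector as first basis vector, both conjugates have a zero
   upper right block and commuting lower right blocks. *)
have [v v0 /andP[vA vB]] := closed_common_eigenvector2 (ltn0Sn k) cAB.
have vfree : row_free v by rewrite /row_free rank_rV v0.
have [S Su Sv] := @row_free_unitmx_ext _ 1 k v vfree.
set A0 := conjmx S A; set B0 := conjmx S B.
have urA0 : ursubmx A0 = 0 by apply: conjmx_ursub_stable; rewrite ?Sv.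
have urB0 : ursubmx B0 = 0 by apply: conjmx_ursub_stable; rewrite ?Sv.
have cAB0 : drsubmx A0 *m drsubmx B0 = drsubmx B0 *m drsubmx A0.
  by rewrite -!drsubmxM // -!conjmxM ?inE ?stablemx_unit // cAB.
have [Q Qu /andP[QA QB]] := IHk _ _ cAB0.
have Bu : (block_mx 1%:M 0 0 Q : 'M_(1 + k)) \in unitmx.
  by rewrite block_diag_mx_unit unitmx1.
exists (block_mx 1%:M 0 0 Q *m S); first by rewrite unitmx_mul Bu.
rewrite !conjuMumx //; apply/andP.
by split; apply: (@is_trig_conjmx_block _ 1 k); rewrite ?mx11_is_trig.
Qed.

Section TriangularProducts.
Variables (R : comPzSemiRingType) (n : nat).
Implicit Types X Y : 'M[R]_n.

Lemma is_trig_mxM X Y : is_trig_mx X -> is_trig_mx Y -> is_trig_mx (X *m Y).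
Proof.
move=> /is_trig_mxP trX /is_trig_mxP trY; apply/is_trig_mxP => i j ltij.
rewrite mxE big1 // => k _; have [ltik|leki] := ltnP i k.
  by rewrite trX // mul0r.
by rewrite trY ?mulr0 // (leq_ltn_trans leki ltij).
Qed.

Lemma trig_mulmx_diag X Y i : is_trig_mx X -> is_trig_mx Y ->
  (X *m Y) i i = X i i * Y i i.
Proof.
move=> /is_trig_mxP trX /is_trig_mxP trY.
rewrite mxE (bigD1 i) //= big1 ?addr0 // => k neqki.
have [ltik|ltki|eqik] := ltngtP i k; first by rewrite trX ?mul0r.
  by rewrite trY ?mulr0.
by rewrite (val_inj eqik) eqxx in neqki.
Qed.

Lemma is_trig_mxX X k : is_trig_mx X -> is_trig_mx (X ^+ k).
Proof.
move=> trX; elim: k => [|k IHk]; first exact: scalar_mx_is_trig.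
by rewrite exprS -mulmxE is_trig_mxM.
Qed.

Lemma trig_mxX_diag X k i : is_trig_mx X -> (X ^+ k) i i = X i i ^+ k.
Proof.
move=> trX; elim: k => [|k IHk]; first by rewrite !expr0 mxE eqxx.
by rewrite !exprS -mulmxE trig_mulmx_diag ?is_trig_mxX // IHk.
Qed.

End TriangularProducts.

Lemma conjmxX (F : fieldType) n (P A : 'M[F]_n) k : P \in unitmx ->
  conjmx P (A ^+ k) = conjmx P A ^+ k.
Proof.
move=> Pu; elim: k => [|k IHk].
  by rewrite !expr0 conjmx_scalar ?row_free_unit.
by rewrite !exprS -!mulmxE conjmxM ?inE ?stablemx_unit // IHk.
Qed.

Lemma char_poly_conjmx (F : fieldType) n (P A : 'M[F]_n) : P \in unitmx ->
  char_poly (conjmx P A) = char_poly A.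
Proof.
move=> Pu; set Px := map_mx polyC P.
have Pxu : Px \in unitmx by rewrite map_unitmx.
have PxX : Px *m 'X%:M *m invmx Px = 'X%:M.
  by rewrite scalar_mxC -mulmxA mulmxV // mulmx1.
rewrite /char_poly.
have -> : char_poly_mx (conjmx P A) = Px *m char_poly_mx A *m invmx Px.
  by rewrite conjumx // mulmxBr mulmxBl PxX /Px -map_invmx -!map_mxM.
by rewrite !det_mulmx mulrAC -det_mulmx mulmxV // det1 mul1r.
Qed.

Lemma mx_conj_char_poly (F : fieldType) n (A B : 'M[F]_n) :
  mx_conj A B -> char_poly B = char_poly A.
Proof. by case=> P Pu ->; rewrite -conjVmx // char_poly_conjmx ?unitmx_inv. Qed.

Lemma closed_joint_spectrum (C : closedFieldType) n (T A : 'M[C]_n) :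
  T *m A = A *m T ->
  exists t u : 'I_n -> C, char_poly A = \prod_i ('X - (u i)%:P) /\
    forall k, char_poly (T *m A ^+ k) = \prod_i ('X - (t i * u i ^+ k)%:P).
Proof.
move=> cTA; have [P Pu /andP[trT trA]] := closed_cotrigonalization2 cTA.
exists (fun i => conjmx P T i i), (fun i => conjmx P A i i).
split=> [|k]; first by rewrite -(char_poly_conjmx A Pu) char_poly_trig.
rewrite -(char_poly_conjmx _ Pu) conjmxM ?inE ?stablemx_unit // conjmxX //.
rewrite char_poly_trig; last by rewrite is_trig_mxM ?is_trig_mxX.
by apply: eq_bigr => i _; rewrite trig_mulmx_diag ?trig_mxX_diag ?is_trig_mxX.
Qed.

Lemma eq_prod_XsubC_perm (F : fieldType) n (x y : 'I_n -> F) :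
  \prod_i ('X - (x i)%:P) = \prod_i ('X - (y i)%:P) ->
  exists p : 'S_n, forall i, x i = y (p i).
Proof.
have prod_tuple (z : 'I_n -> F) :
    \prod_i ('X - (z i)%:P) = \prod_(c <- [tuple z i | i < n]) ('X - c%:P).
  by rewrite big_map big_enum.
rewrite !prod_tuple => /prod_XsubC_eq/tuple_permP [p xy]; exists p => i.
by have := congr1 (nth 0 ^~ i) xy; rewrite /= !nth_mktuple tnth_mktuple.
Qed.

Lemma root_prod_XsubC_codom (R : idomainType) n (x : 'I_n -> R) a :
  root (\prod_i ('X - (x i)%:P)) a = (a \in codom x).
Proof. by rewrite -root_prod_XsubC big_image. Qed.

Lemma eigenvalue_unitmx_neq0 (F : fieldType) n (A : 'M[F]_n) a :
  A \in unitmx -> eigenvalue A a -> a != 0.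
Proof.
move=> Au /eigenvalueP [v vA v0]; apply: contraNneq v0 => a0.
by rewrite -[v](mulmxK Au) vA a0 scale0r mul0mx.
Qed.

Lemma midpoint_perm_fix (R : realDomainType) (I : finType)
    (s t : {perm I}) (x : I -> R) :
  (forall i, x (s i) *+ 2 = x i + x (t i)) -> forall i, x (s i) = x i.
Proof.
move=> mid.
have sum_perm (p : {perm I}) : \sum_i x (p i) ^+ 2 = \sum_i x i ^+ 2.
  by rewrite [RHS](reindex_inj (@perm_inj _ p)).
have sq_diff i : (x i - x (t i)) ^+ 2 =
    x i ^+ 2 *+ 2 + x (t i) ^+ 2 *+ 2 - x (s i) ^+ 2 *+ 4.
  have -> : x (s i) ^+ 2 *+ 4 = (x (s i) *+ 2) ^+ 2 by ring.
  by rewrite mid; ring.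
have : \sum_i (x i - x (t i)) ^+ 2 = 0.
  rewrite (eq_bigr _ (fun i _ => sq_diff i)) !sumrB big_split /=.
  by rewrite !sumrMnl !sum_perm; ring.
move=> /(psumr_eq0P (fun i _ => sqr_ge0 (x i - x (t i)))) sum0 i.
have /eqP := sum0 i isT; rewrite sqrf_eq0 subr_eq0 => /eqP xt.
by apply: (@pmulrnI _ 2) => //; rewrite mid -xt mulr2n.
Qed.

Definition midpoint_mx (R : pzRingType) n (s t : 'S_n) : 'M[R]_n :=
  perm_mx s *+ 2 - 1%:M - perm_mx t.

Lemma perm_mx_sub_midpoint (R : realFieldType) n (s t : 'S_n) :
  (perm_mx s - 1%:M <= midpoint_mx R s t)%MS.
Proof.
(* Duality: every column killed by [midpoint_mx] is killed by [perm_mx s - 1]. *)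
rewrite submxE; apply/eqP/matrixP => i j.
have /matrixP MK := mulmx_coker (midpoint_mx R s t).
set K := cokermx _ in MK *; clearbody K.
have mid k : K (s k) j *+ 2 = K k j + K (t k) j.
  apply/eqP; rewrite -subr_eq0 opprD addrA; apply/eqP.
  by move: (MK k j); rewrite !mulmxBl mulr2n mulmxDl -!row_permE mul1mx !mxE.
apply/eqP; rewrite !mulmxBl -row_permE mul1mx !mxE subr_eq0.
by rewrite (midpoint_perm_fix mid).
Qed.

Lemma rat_mx_clear_denom m n (D : 'M[rat]_(m, n)) :
  exists2 d : int, 0 < d &
    exists Z : 'M[int]_(m, n), d%:~R *: D = map_mx intr Z.
Proof.
pose d := \prod_(ij : 'I_m * 'I_n) denq (D ij.1 ij.2).
exists d; first by apply: prodr_gt0 => ij _; apply: denq_gt0.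
exists (map_mx numq (d%:~R *: D)); apply/matrixP => i j; rewrite !mxE.
by rewrite mulrC [d](bigD1 (i, j)) //= rmorphM mulrA -numqE -rmorphM numq_int.
Qed.

Lemma map_midpoint_mx (R S : pzRingType) (f : {rmorphism R -> S}) n
    (s t : 'S_n) :
  map_mx f (midpoint_mx R s t) = midpoint_mx S s t.
Proof.
by rewrite /midpoint_mx !mulr2n !map_mxB map_mxD !map_perm_mx map_mx1.
Qed.

Lemma perm_mx_int_midpoint n (s t : 'S_n) :
  exists2 d : int, 0 < d &
    exists Z : 'M[int]_n, d *: (perm_mx s - 1%:M) = Z *m midpoint_mx int s t.
Proof.
have /submxP [D sD] := perm_mx_sub_midpoint rat s t.
have [d d_gt0 [Z dD]] := rat_mx_clear_denom D.
exists d => //; exists Z; apply/matrixP => i j; apply: (@intr_inj rat).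
have /matrixP/(_ i j) := congr1 (fun A => d%:~R *: A) sD.
rewrite scalemxAl dD -(map_midpoint_mx intr) -map_mxM !mxE => <-.
by rewrite rmorphM rmorphB /= !rmorph_nat.
Qed.

Section ZMonomial.
Variables (R : idomainType) (n : nat) (x : 'I_n -> R).
Hypothesis x_unit : forall j, x j \is a GRing.unit.

Definition zmonomial (g : 'rV[int]_n) : R := \prod_j x j ^ g 0 j.

Lemma zmonomial0 : zmonomial 0 = 1.
Proof. by apply: big1 => j _; rewrite mxE expr0z. Qed.

Lemma zmonomialD g h : zmonomial (g + h) = zmonomial g * zmonomial h.
Proof. by rewrite -big_split; apply: eq_bigr => j _; rewrite mxE exprzDr. Qed.

Lemma zmonomialZ z g : zmonomial (z *: g) = zmonomial g ^ z.
Proof.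
rewrite /zmonomial; under eq_bigr do rewrite mxE mulrC -exprz_exp.
pose K (a b : R) := a \is a GRing.unit /\ b = a ^ z.
suff [] : K (\prod_j x j ^ g 0 j) (\prod_j (x j ^ g 0 j) ^ z) by [].
apply: (big_rec2 K) => [|j a b _ [ua ->]]; first by rewrite /K unitr1 exp1rz.
by rewrite /K unitrM unitrXz // ua exprzMl ?unitrXz.
Qed.

Lemma zmonomialB g h : zmonomial (g - h) = zmonomial g / zmonomial h.
Proof. by rewrite zmonomialD -scaleN1r zmonomialZ exprN1. Qed.

Lemma zmonomialMn g k : zmonomial (g *+ k) = zmonomial g ^+ k.
Proof. by rewrite -scaler_nat zmonomialZ natz. Qed.

Lemma zmonomial_mulmx m (u : 'rV[int]_m) (M : 'M[int]_(m, n)) :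
  zmonomial (u *m M) = \prod_k zmonomial (row k M) ^ u 0 k.
Proof.
rewrite mulmx_sum_row (big_morph _ zmonomialD zmonomial0).
by apply: eq_bigr => k _; rewrite zmonomialZ.
Qed.

Lemma zmonomial_row_perm (s : 'S_n) i :
  zmonomial (row i (perm_mx s)) = x (s i).
Proof.
rewrite /zmonomial (bigD1 (s i)) //= big1 => [|j sij]; rewrite !mxE.
  by rewrite eqxx mulr1.
by rewrite eq_sym (negbTE sij).
Qed.

End ZMonomial.

Lemma midpoint_ratio_root_of_unity (F : fieldType) n (s t : 'S_n)
    (x : 'I_n -> F) :
  (forall k, x k != 0) -> (forall k, x (s k) ^+ 2 = x k * x (t k)) ->
  forall i, is_root_of_unity (x (s i) / x i).
Proof.
move=> x0 mid i; have xu k : x k \is a GRing.unit by rewrite unitfE.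
have mono_id k : zmonomial x (row k 1%:M) = x k.
  by rewrite -perm_mx1 zmonomial_row_perm ?perm1.
have mono_mid k : zmonomial x (row k (midpoint_mx int s t)) = 1.
  rewrite /midpoint_mx !raddfB raddfMn /= !zmonomialB ?zmonomialMn //.
  by rewrite !zmonomial_row_perm // mono_id mid mulrAC mulfK // divff.
have [d d_gt0 [Z dZ]] := perm_mx_int_midpoint s t.
have := congr1 (zmonomial x \o row i) dZ; rewrite /= linearZ /= row_mul.
rewrite zmonomialZ // zmonomial_mulmx // raddfB /= zmonomialB // mono_id.
rewrite zmonomial_row_perm // big1 => [ratio1|k _]; last first.
  by rewrite mono_mid exp1rz.
have [N dN] : exists N : nat, d = N%:Z by exists `|d|%N; rewrite gtz0_abs.
by exists N; [rewrite -ltz_nat -dN | rewrite -ratio1 dN].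
Qed.

Lemma closed_root_of_unity_eigenvalues (C : closedFieldType) n
    (T A : 'M[C]_n) :
  T \in unitmx -> T *m A = A *m T ->
  char_poly (T *m A) = char_poly T -> char_poly (T *m A ^+ 2) = char_poly T ->
  forall a, eigenvalue A a -> is_root_of_unity a.
Proof.
move=> Tu cTA TA_T TA2_T a.
have [t [u [charA charTA]]] := closed_joint_spectrum cTA.
have charT : char_poly T = \prod_i ('X - (t i)%:P).
  rewrite -[T]mulr1 -(expr0 A) -mulmxE charTA.
  by apply: eq_bigr => i _; rewrite expr0 mulr1.
have spectrum_perm k : char_poly (T *m A ^+ k) = char_poly T ->
    exists p : 'S_n, forall i, t i * u i ^+ k = t (p i).
  by move=> TAk_T; apply: eq_prod_XsubC_perm; rewrite -charTA TAk_T charT.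
have [p tp] := spectrum_perm 1%N ltac:(by rewrite expr1).
have [q tq] := spectrum_perm 2%N TA2_T.
have t0 i : t i != 0.
  apply: (eigenvalue_unitmx_neq0 Tu); rewrite eigenvalue_root_char charT.
  by rewrite root_prod_XsubC_codom codom_f.
have mid i : t (p i) ^+ 2 = t i * t (q i) by rewrite -tp -tq; ring.
rewrite eigenvalue_root_char charA root_prod_XsubC_codom => /codomP[i ->].
rewrite -(mulKf (t0 i) (u i)) -[u i]expr1 tp mulrC.
exact: midpoint_ratio_root_of_unity.
Qed.

Theorem theorem6p2 (F : fieldType) (d : nat) (hd : (0 < d)%N)
  (T A : 'M[F]_d) (hT : T \in unitmx) (hA : A \in unitmx)
  (hcomm : T *m A = A *m T)
  (h1 : mx_conj T (T *m A)) (h2 : mx_conj T (T *m (A *m A))) :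
  forall (L : closedFieldType) (f : {rmorphism F -> L}) (a : L),
    eigenvalue (map_mx f A) a -> is_root_of_unity a.
Proof.
move=> L f; apply: (@closed_root_of_unity_eigenvalues _ _ (map_mx f T)).
- by rewrite map_unitmx.
- by rewrite -!map_mxM hcomm.
- by rewrite -map_mxM -!map_char_poly (mx_conj_char_poly h1).
- by rewrite expr2 -mulmxE -!map_mxM -!map_char_poly (mx_conj_char_poly h2).
Qed.
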